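(* Let $\mathbf v=(v_1,\dots,v_m)$ and $\mathbf k=(k_1,\dots,k_m)$ be $m$-tuples of positive integers with $\mathbf v\ge\mathbf k$ and $\sum_i k_i\ge2$, and $\mathbf w=(w_1,\dots,w_n)$ and $\boldsymbol\ell=(\ell_1,\dots,\ell_n)$ be $n$-tuples of positive integers with $\mathbf w\ge\boldsymbol\ell$ and $\sum_i\ell_i\ge2$. Then \[ C(\mathrm{cat}(\mathbf v,\mathbf w),\mathrm{cat}(\mathbf k,\boldsymbol\ell),2)\ \le\ \max\{C(\mathbf v,\mathbf k,2),C(\mathbf w,\boldsymbol\ell,2)\}+\left(\max_{i=1,\dots,m}\left\lceil\frac{v_i}{k_i}\right\rceil\right)\left(\max_{i=1,\dots,n}\left\lceil\frac{w_i}{\ell_i}\right\rceil\right). \]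
   Context: $\mathrm{cat}(\mathbf a,\mathbf b)$ denotes concatenation of tuples. For tuples $\mathbf a,\mathbf b$ of positive integers of the same length $p$ with $\mathbf b\le\mathbf a$ entrywise: let $Y_1,\dots,Y_p$ be pairwise disjoint sets with $|Y_i|=a_i$; a block is a $p$-tuple $(B_1,\dots,B_p)$ with $B_i\subseteq Y_i$, $|B_i|=b_i$; a $p$-tuple of sets $(T_1,\dots,T_p)$ is $(\mathbf a,\mathbf b,2)$-admissible if $T_i\subseteq Y_i$, $|T_i|\le b_i$ and $\sum|T_i|=2$, and is contained in a block if $T_i\subseteq B_i$ for all $i$. A ${\rm GC}(\mathbf a,\mathbf b,2)$ is a finite family (repetitions allowed) of blocks containing every admissible tuple in at least one block; $C(\mathbf a,\mathbf b,2)$ is the minimum number of blocks. *)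

From mathcomp Require Import all_boot.
From Stdlib Require Import ClassicalEpsilon.

(* A p-tuple a of positive integers is represented as a sequence a : seq nat
   with p = size a.  The disjoint ground sets Y_1, ..., Y_p with |Y_i| = a_i
   are realised as the fibres of the disjoint union
   Pt a = { i : 'I_p & 'I_(a_i) }.  A p-tuple of sets (T_1,...,T_p) with
   T_i \subseteq Y_i is identified with the subset T = \bigcup T_i of Pt a,
   T_i being its fibre over i. *)
Definition Pt (a : seq nat) : finType := {i : 'I_(size a) & 'I_(nth 0 a i)}.

Definition part (a : seq nat) (i : 'I_(size a)) (S : {set Pt a}) : {set Pt a} :=
  [set x in S | tag x == i].

Definition is_block (a b : seq nat) (B : {set Pt a}) : bool :=
  [forall i : 'I_(size a), #|part a i B| == nth 0 b i].

Definition admissible (a b : seq nat) (T : {set Pt a}) : bool :=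
  [forall i : 'I_(size a), #|part a i T| <= nth 0 b i] && (#|T| == 2).

Definition is_GC (a b : seq nat) (F : seq {set Pt a}) : bool :=
  all (is_block a b) F &&
  [forall T : {set Pt a}, admissible a b T ==> has (fun B : {set Pt a} => T \subset B) F].

Definition has_GC_of_size (a b : seq nat) (n : nat) : Prop :=
  exists F : seq {set Pt a}, size F = n /\ is_GC a b F.

Definition hasGCb (a b : seq nat) (n : nat) : bool :=
  if excluded_middle_informative (has_GC_of_size a b n) then true else false.

(* C(a,b,2): the minimum number of blocks in a GC(a,b,2)
   (set to 0 if no GC exists, which never happens when b <= a). *)
Definition C2 (a b : seq nat) : nat :=
  match excluded_middle_informative (exists n, hasGCb a b n) with
  | left P => ex_minn P
  | right _ => 0
  end.

Definition ceildiv (x y : nat) : nat := (x + y).-1 %/ y.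

From mathcomp Require Import all_boot zify.
From Stdlib Require Import ClassicalEpsilon.

(* Take optimal covers F1 of (v, k) and F2 of (w, l), pad the shorter one, and
   pair them up as the blocks B1_j + B2_j: these cover every admissible pair
   lying on one side of the concatenation.  A pair with one point on each side
   is covered by windows: for s < max_i ceil(v_i / k_i), the s-th window of
   (v, k) takes in coordinate i the k_i consecutive points starting at
   min(s k_i, v_i - k_i), so that point j of Y_i lies in window j / k_i.  The
   unions of a left and a right window give the remaining product term. *)

Section Points.
Variable a : seq nat.

Definition code (x : Pt a) : nat * nat := (val (tag x), val (tagged x)).

Lemma code_inj : injective code.
Proof.
move=> [i1 j1] [i2 j2] [/val_inj ei]; subst i2.
by move=> /val_inj ->.
Qed.

Definition mkPt i j (ltia : i < size a) (ltj : j < nth 0 a i) : Pt a :=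
  @Tagged _ (Ordinal ltia) (fun i => 'I_(nth 0 a i)) (Ordinal ltj).

Lemma in_part i (S : {set Pt a}) x : (x \in part a i S) = (x \in S) && (tag x == i).
Proof. by rewrite inE. Qed.

Lemma part_setU i (A B : {set Pt a}) : part a i (A :|: B) = part a i A :|: part a i B.
Proof. by apply/setP => x; rewrite !inE andb_orl. Qed.

Lemma card_part_pred (f : nat -> nat -> bool) i :
  #|part a i [set x : Pt a | f (tag x) (tagged x)]| = #|[set j : 'I_(nth 0 a i) | f i j]|.
Proof.
pose fibre (j : 'I_(nth 0 a i)) : Pt a := @Tagged _ i (fun i => 'I_(nth 0 a i)) j.
have fibre_inj : injective fibre by move=> j1 j2 /(congr1 code) [/val_inj].
rewrite -(card_imset _ fibre_inj); apply: eq_card => -[i0 j0].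
rewrite in_part !inE /=; have [ei|nei] := eqVneq i0 i.
  subst i0; rewrite andbT (mem_imset _ _ fibre_inj); first by rewrite inE.
rewrite andbF; apply/esym/negP => /imsetP[j _ /(congr1 (@tag _ _)) /= ei].
by rewrite ei eqxx in nei.
Qed.
End Points.

Arguments code {a} x.
Arguments mkPt {a i j} ltia ltj.
Arguments code_inj {a}.

Section Concatenation.
Variables v w : seq nat.

Definition idxL (i : 'I_(size v)) : 'I_(size (v ++ w)) :=
  cast_ord (esym (size_cat v w)) (lshift (size w) i).
Definition idxR (i : 'I_(size w)) : 'I_(size (v ++ w)) :=
  cast_ord (esym (size_cat v w)) (rshift (size v) i).

Lemma nth_idxL (i : 'I_(size v)) : nth 0 v i = nth 0 (v ++ w) (idxL i).
Proof. by rewrite nth_cat /= ltn_ord. Qed.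

Lemma nth_idxR (i : 'I_(size w)) : nth 0 w i = nth 0 (v ++ w) (idxR i).
Proof. by rewrite nth_cat /= ltnNge leq_addr addKn. Qed.

Definition liftL (x : Pt v) : Pt (v ++ w) :=
  @Tagged _ (idxL (tag x)) (fun i => 'I_(nth 0 (v ++ w) i)) (cast_ord (nth_idxL _) (tagged x)).
Definition liftR (x : Pt w) : Pt (v ++ w) :=
  @Tagged _ (idxR (tag x)) (fun i => 'I_(nth 0 (v ++ w) i)) (cast_ord (nth_idxR _) (tagged x)).

Lemma code_liftL x : code (liftL x) = code x. Proof. by []. Qed.
Lemma code_liftR x : code (liftR x) = (size v + (code x).1, (code x).2). Proof. by []. Qed.

Lemma liftL_inj : injective liftL.
Proof. by move=> x y /(congr1 code); rewrite !code_liftL => /code_inj. Qed.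

Lemma liftR_inj : injective liftR.
Proof.
move=> x y /(congr1 code); rewrite !code_liftR => -[/addnI e1 e2].
by apply: code_inj; congr pair.
Qed.

Lemma eq_idxL i j : (idxL i == idxL j) = (i == j).
Proof. by rewrite -!val_eqE. Qed.
Lemma eq_idxR i j : (idxR i == idxR j) = (i == j).
Proof. by rewrite -!val_eqE /= eqn_add2l. Qed.
Lemma eq_idxLR i j : (idxL i == idxR j) = false.
Proof. by apply/negbTE; rewrite -val_eqE /= neq_ltn ltn_addr. Qed.
Lemma eq_idxRL i j : (idxR i == idxL j) = false.
Proof. by rewrite eq_sym eq_idxLR. Qed.

Lemma liftL_neq_liftR x y : liftL x != liftR y.
Proof. by apply/eqP => /(congr1 (@tag _ _)) /eqP; rewrite eq_idxLR. Qed.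

Variant concat_spec : Pt (v ++ w) -> Type :=
  | ConcatL x : concat_spec (liftL x)
  | ConcatR y : concat_spec (liftR y).

Lemma concatP x : concat_spec x.
Proof.
have [ltxv|lexv] := ltnP (code x).1 (size v).
  have ltj : (code x).2 < nth 0 v (Ordinal ltxv).
    by rewrite (nth_idxL (Ordinal ltxv)); exact: ltn_ord.
  have -> : x = liftL (mkPt ltxv ltj) by apply: code_inj.
  by constructor.
have ltiw : (code x).1 - size v < size w.
  by rewrite ltn_subLR // -size_cat; exact: ltn_ord.
have ltj : (code x).2 < nth 0 w (Ordinal ltiw).
  by rewrite (nth_idxR (Ordinal ltiw)) /= subnKC //; exact: ltn_ord.
have -> : x = liftR (mkPt ltiw ltj); last by constructor.
by apply: code_inj; rewrite code_liftR /= subnKC // -surjective_pairing.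
Qed.

Variant concat_idx_spec : 'I_(size (v ++ w)) -> Type :=
  | ConcatIdxL i : concat_idx_spec (idxL i)
  | ConcatIdxR i : concat_idx_spec (idxR i).

Lemma concat_idxP i : concat_idx_spec i.
Proof.
have [ltiv|leiv] := ltnP i (size v).
  have -> : i = idxL (Ordinal ltiv) by apply: val_inj.
  by constructor.
have ltiw : i - size v < size w by rewrite ltn_subLR // -size_cat.
have -> : i = idxR (Ordinal ltiw) by apply: val_inj; rewrite /= subnKC.
by constructor.
Qed.

Definition setL (S : {set Pt v}) : {set Pt (v ++ w)} := liftL @: S.
Definition setR (S : {set Pt w}) : {set Pt (v ++ w)} := liftR @: S.

Lemma mem_setL S x : (liftL x \in setL S) = (x \in S).
Proof. exact: (mem_imset _ _ liftL_inj). Qed.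
Lemma mem_setR S y : (liftR y \in setR S) = (y \in S).
Proof. exact: (mem_imset _ _ liftR_inj). Qed.
Lemma liftR_notin_setL S y : (liftR y \in setL S) = false.
Proof. by apply/negP => /imsetP[x _ /eqP]; rewrite eq_sym (negbTE (liftL_neq_liftR _ _)). Qed.
Lemma liftL_notin_setR S x : (liftL x \in setR S) = false.
Proof. by apply/negP => /imsetP[y _ /eqP]; rewrite (negbTE (liftL_neq_liftR _ _)). Qed.

Lemma card_setL S : #|setL S| = #|S|.
Proof. exact: (card_imset _ liftL_inj). Qed.
Lemma card_setR S : #|setR S| = #|S|.
Proof. exact: (card_imset _ liftR_inj). Qed.

Lemma setL_set2 x y : [set liftL x; liftL y] = setL [set x; y].
Proof. by rewrite /setL imsetU1 imset_set1. Qed.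
Lemma setR_set2 x y : [set liftR x; liftR y] = setR [set x; y].
Proof. by rewrite /setR imsetU1 imset_set1. Qed.

Definition mem_concat := (mem_setL, mem_setR, liftR_notin_setL, liftL_notin_setR,
  eq_idxL, eq_idxR, eq_idxLR, eq_idxRL).

Lemma part_setL_idxL i S : part (v ++ w) (idxL i) (setL S) = setL (part v i S).
Proof. by apply/setP => x; case: (concatP x) => y; rewrite !(in_part, mem_concat). Qed.
Lemma part_setR_idxR i S : part (v ++ w) (idxR i) (setR S) = setR (part w i S).
Proof. by apply/setP => x; case: (concatP x) => y; rewrite !(in_part, mem_concat). Qed.
Lemma part_setL_idxR i S : part (v ++ w) (idxR i) (setL S) = set0.
Proof. by apply/setP => x; case: (concatP x) => y; rewrite in_part inE !mem_concat ?andbF. Qed.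
Lemma part_setR_idxL i S : part (v ++ w) (idxL i) (setR S) = set0.
Proof. by apply/setP => x; case: (concatP x) => y; rewrite in_part inE !mem_concat ?andbF. Qed.
End Concatenation.

Arguments idxL {v} w i.
Arguments idxR v {w} i.
Arguments liftL {v} w x.
Arguments liftR v {w} x.
Arguments setL {v} w S.
Arguments setR v {w} S.
Arguments concatP {v w} x.
Arguments concat_idxP {v w} i.

Section ConcatBlocks.
Variables v w k l : seq nat.
Hypothesis sk : size k = size v.

Lemma nth_cat_idxL (i : 'I_(size v)) : nth 0 (k ++ l) (idxL w i) = nth 0 k i.
Proof. by rewrite nth_cat /= sk ltn_ord. Qed.

Lemma nth_cat_idxR (i : 'I_(size w)) : nth 0 (k ++ l) (idxR v i) = nth 0 l i.
Proof. by rewrite nth_cat /= sk ltnNge leq_addr addKn. Qed.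

Lemma is_block_cat B1 B2 :
  is_block v k B1 -> is_block w l B2 -> is_block (v ++ w) (k ++ l) (setL w B1 :|: setR v B2).
Proof.
move=> /forallP B1k /forallP B2l; apply/forallP => i; rewrite part_setU.
case: (concat_idxP i) => j.
  by rewrite part_setL_idxL part_setR_idxL setU0 card_setL nth_cat_idxL B1k.
by rewrite part_setL_idxR part_setR_idxR set0U card_setR nth_cat_idxR B2l.
Qed.

Lemma admissible_setL T :
  admissible (v ++ w) (k ++ l) (setL w T) -> admissible v k T.
Proof.
rewrite /admissible card_setL => /andP[/forallP Tk ->]; rewrite andbT.
by apply/forallP => i; have := Tk (idxL w i); rewrite part_setL_idxL card_setL nth_cat_idxL.
Qed.

Lemma admissible_setR T :
  admissible (v ++ w) (k ++ l) (setR v T) -> admissible w l T.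
Proof.
rewrite /admissible card_setR => /andP[/forallP Tl ->]; rewrite andbT.
by apply/forallP => i; have := Tl (idxR v i); rewrite part_setR_idxR card_setR nth_cat_idxR.
Qed.
End ConcatBlocks.

Arguments admissible_setL {v w k l} sk {T}.
Arguments admissible_setR {v w k l} sk {T}.

Lemma extend_subset (T : finType) (c : nat) (X U : {set T}) :
  X \subset U -> #|X| <= c <= #|U| ->
  exists Y : {set T}, [/\ X \subset Y, Y \subset U & #|Y| = c].
Proof.
move=> XU /andP[Xc cU].
have /card_geqP[s [us ss sUX]] : c - #|X| <= #|U :\: X| by rewrite cardsDS //; lia.
have XsI : X :&: [set:: s] = set0.
  by apply/setP => x; rewrite !inE; apply/negP => /andP[xX /sUX]; rewrite inE xX.
exists (X :|: [set:: s]); split; first exact: subsetUl.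
  by rewrite subUset XU; apply/subsetP => x; rewrite inE => /sUX /setDP[].
by rewrite cardsU XsI cards0 subn0 cardsE (card_uniqP us) ss; lia.
Qed.

Section Covers.
Variables a b : seq nat.
Hypothesis le_ba : forall i, i < size a -> nth 0 b i <= nth 0 a i.

Lemma card_part_setT i : #|part a i [set: Pt a]| = nth 0 a i.
Proof. by rewrite (card_part_pred a (fun _ _ => true)) cardsT card_ord. Qed.

Lemma exists_block T : (forall i, #|part a i T| <= nth 0 b i) ->
  exists2 B, is_block a b B & T \subset B.
Proof.
move=> Tb.
have /fin_all_exists[Y HY] i : exists Y : {set Pt a},
    [/\ part a i T \subset Y, Y \subset part a i [set: Pt a] & #|Y| = nth 0 b i].
  apply: extend_subset; first by apply/subsetP => x; rewrite !in_part inE => /andP[_ ->].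
  by rewrite Tb card_part_setT le_ba.
exists [set x | x \in Y (tag x)].
  apply/forallP => i; have [_ Yi <-] := HY i; apply/eqP/eq_card => x.
  rewrite in_part inE; apply/andP/idP => [[Yx /eqP <-] // | Yx].
  by have := subsetP Yi x Yx; rewrite in_part => /andP[_ /eqP ->].
apply/subsetP => x Tx; rewrite inE; have [TY _ _] := HY (tag x).
by apply: (subsetP TY); rewrite in_part Tx eqxx.
Qed.

Lemma exists_GC : exists F, is_GC a b F.
Proof.
exists (enum [set B | is_block a b B]); apply/andP; split.
  by apply/allP => B; rewrite mem_enum inE.
apply/forallP => T; apply/implyP => /andP[/forallP Tb _].
have [B Bb TB] := exists_block _ Tb.
by apply/hasP; exists B; rewrite // mem_enum inE.
Qed.
End Covers.

Arguments exists_GC {a b} le_ba.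

Lemma hasGCbP a b n : reflect (has_GC_of_size a b n) (hasGCb a b n).
Proof. by rewrite /hasGCb; case: excluded_middle_informative => ?; constructor. Qed.

Lemma C2_min {a b F} : is_GC a b F -> C2 a b <= size F.
Proof.
move=> GCF; have ex : exists n, hasGCb a b n by exists (size F); apply/hasGCbP; exists F.
rewrite /C2; case: excluded_middle_informative => // P.
by case: ex_minnP => n _; apply; apply/hasGCbP; exists F.
Qed.

Lemma C2_attained {a b} : (exists F, is_GC a b F) -> exists F, size F = C2 a b /\ is_GC a b F.
Proof.
move=> [F GCF]; have ex : exists n, hasGCb a b n by exists (size F); apply/hasGCbP; exists F.
rewrite /C2; case: excluded_middle_informative => // P.
by case: ex_minnP => n /hasGCbP.
Qed.

Lemma card_ord_interval V st K : st + K <= V -> #|[set j : 'I_V | st <= j < st + K]| = K.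
Proof.
move=> le_stKV.
have -> : #|[set j : 'I_V | st <= j < st + K]| = count (fun j => st <= j < st + K) (iota 0 V).
  rewrite cardsE cardE /enum_mem size_filter -enumT -val_enum_ord count_map.
  by apply: eq_count => j; rewrite !inE.
rewrite -(subnKC le_stKV) -addnA !iotaD !count_cat add0n.
rewrite (@eq_in_count _ _ pred0) ?count_pred0; last first.
  by move=> j; rewrite mem_iota => /andP[_ ltj] /=; rewrite leqNgt ltj.
rewrite (@eq_in_count _ _ predT) ?count_predT ?size_iota; last first.
  by move=> j; rewrite mem_iota => /andP[-> ->].
rewrite (@eq_in_count _ _ pred0) ?count_pred0 ?addn0 //.
by move=> j; rewrite mem_iota => /andP[lej _] /=; rewrite ltnNge lej andbF.
Qed.

Definition window_start V K s := minn (s * K) (V - K).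
Definition in_window V K s j := window_start V K s <= j < window_start V K s + K.

Lemma in_window_divn V K j : 0 < K -> K <= V -> j < V -> in_window V K (j %/ K) j.
Proof.
move=> K0 KV jV; rewrite /in_window /window_start.
have := divn_eq j K; have := ltn_pmod j K0; set q := j %/ K * K; lia.
Qed.

Lemma divn_lt_ceildiv V K j : 0 < K -> j < V -> j %/ K < ceildiv V K.
Proof.
move=> K0 jV; rewrite /ceildiv ltn_divLR //.
have := divn_eq (V + K).-1 K; have := ltn_pmod (V + K).-1 K0; set q := _ %/ _ * _; lia.
Qed.

Section Windows.
Variables a b : seq nat.
Hypothesis le_ba : forall i, i < size a -> nth 0 b i <= nth 0 a i.

Definition window (s : nat) : {set Pt a} :=
  [set x : Pt a | in_window (nth 0 a (tag x)) (nth 0 b (tag x)) s (tagged x)].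

Lemma is_block_window s : is_block a b (window s).
Proof.
apply/forallP => i; rewrite (card_part_pred a (fun i => in_window (nth 0 a i) (nth 0 b i) s)).
rewrite card_ord_interval //.
by have := le_ba _ (ltn_ord i); rewrite /window_start; lia.
Qed.

Hypotheses (sb : size b = size a) (pos_b : all (fun x => 0 < x) b).

Lemma window_cover x :
  exists2 s, s < \max_(i < size a) ceildiv (nth 0 a i) (nth 0 b i) & x \in window s.
Proof.
have b0 : 0 < nth 0 b (tag x) by apply: (allP pos_b); rewrite mem_nth // sb.
have ba := le_ba _ (ltn_ord (tag x)).
exists (tagged x %/ nth 0 b (tag x)); last by rewrite inE in_window_divn.
apply: (leq_trans _ (leq_bigmax (tag x))); exact: divn_lt_ceildiv.
Qed.
End Windows.

Arguments window_cover {a b} le_ba sb pos_b x.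

Section Construction.
Variables v w k l : seq nat.
Hypotheses (sk : size k = size v) (sl : size l = size w).
Hypotheses (pos_k : all (fun x => 0 < x) k) (pos_l : all (fun x => 0 < x) l).
Hypothesis le_kv : forall i, i < size v -> nth 0 k i <= nth 0 v i.
Hypothesis le_lw : forall i, i < size w -> nth 0 l i <= nth 0 w i.
Variables (F1 : seq {set Pt v}) (F2 : seq {set Pt w}).
Hypotheses (GC1 : is_GC v k F1) (GC2 : is_GC w l F2).

Let p := \max_(i < size v) ceildiv (nth 0 v i) (nth 0 k i).
Let q := \max_(i < size w) ceildiv (nth 0 w i) (nth 0 l i).

(* The shorter of F1, F2 is padded with windows, which are blocks. *)
Definition paired_blocks : seq {set Pt (v ++ w)} :=
  [seq setL w (nth (window v k 0) F1 j) :|: setR v (nth (window w l 0) F2 j)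
  | j <- iota 0 (maxn (size F1) (size F2))].

Definition window_blocks : seq {set Pt (v ++ w)} :=
  [seq setL w (window v k s) :|: setR v (window w l t) | s <- iota 0 p, t <- iota 0 q].

Lemma size_blocks :
  size (paired_blocks ++ window_blocks) = maxn (size F1) (size F2) + p * q.
Proof. by rewrite size_cat size_map size_allpairs !size_iota. Qed.

Lemma all_is_block_cat : all (is_block (v ++ w) (k ++ l)) (paired_blocks ++ window_blocks).
Proof.
have nth_block a b F j : all (is_block a b) F -> is_block a b (window a b 0) ->
    is_block a b (nth (window a b 0) F j).
  move=> Fb Wb; have [ltjF|leFj] := ltnP j (size F); last by rewrite nth_default.
  exact/(allP Fb)/mem_nth.
case/andP: GC1 => F1b _; case/andP: GC2 => F2b _.
apply/allP => B; rewrite mem_cat => /orP[/mapP[j _ ->]|/allpairsP[[s t] [_ _ ->]]].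
  by apply: is_block_cat; rewrite // nth_block // is_block_window.
by apply: is_block_cat; rewrite // is_block_window.
Qed.

Lemma paired_blocks_coverL T : admissible v k T ->
  has (fun B : {set Pt (v ++ w)} => setL w T \subset B) paired_blocks.
Proof.
case/andP: GC1 => _ /forallP/(_ T)/implyP cover /cover/hasP[B BF1 TB].
apply/hasP; exists (setL w (nth (window v k 0) F1 (index B F1)) :|:
                    setR v (nth (window w l 0) F2 (index B F1))).
  apply/mapP; exists (index B F1) => //.
  by rewrite mem_iota add0n (leq_trans _ (leq_maxl _ _)) ?index_mem.
by rewrite nth_index // (subset_trans _ (subsetUl _ _)) ?imsetS.
Qed.

Lemma paired_blocks_coverR T : admissible w l T ->
  has (fun B : {set Pt (v ++ w)} => setR v T \subset B) paired_blocks.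
Proof.
case/andP: GC2 => _ /forallP/(_ T)/implyP cover /cover/hasP[B BF2 TB].
apply/hasP; exists (setL w (nth (window v k 0) F1 (index B F2)) :|:
                    setR v (nth (window w l 0) F2 (index B F2))).
  apply/mapP; exists (index B F2) => //.
  by rewrite mem_iota add0n (leq_trans _ (leq_maxr _ _)) ?index_mem.
by rewrite nth_index // (subset_trans _ (subsetUr _ _)) ?imsetS.
Qed.

Lemma window_blocks_cover x y :
  has (fun B : {set Pt (v ++ w)} => [set liftL w x; liftR v y] \subset B) window_blocks.
Proof.
have [s lt_sp xs] := window_cover le_kv sk pos_k x.
have [t lt_tq yt] := window_cover le_lw sl pos_l y.
apply/hasP; exists (setL w (window v k s) :|: setR v (window w l t)).
  by apply/allpairsP; exists (s, t); rewrite !mem_iota.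
by rewrite subUset !sub1set !inE !mem_concat xs yt orbT.
Qed.

Lemma is_GC_cat : is_GC (v ++ w) (k ++ l) (paired_blocks ++ window_blocks).
Proof.
rewrite /is_GC all_is_block_cat; apply/forallP => T; apply/implyP => adT.
case/andP: (adT) => _ /cards2P[x [y [_ eT]]]; move: adT; rewrite eT has_cat => {T eT}.
case: (concatP x) => x'; case: (concatP y) => y' adT; apply/orP.
- by left; rewrite setL_set2 in adT *; exact/paired_blocks_coverL/(admissible_setL sk adT).
- by right; apply: window_blocks_cover.
- by right; rewrite setUC; apply: window_blocks_cover.
- by left; rewrite setR_set2 in adT *; exact/paired_blocks_coverR/(admissible_setR sk adT).
Qed.
End Construction.

Arguments size_blocks {v w k l F1 F2}.
Arguments is_GC_cat {v w k l} sk sl pos_k pos_l le_kv le_lw {F1 F2} GC1 GC2.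

Theorem corollary6p4 (m n : nat) (v k w l : seq nat) :
  size v = m -> size k = m -> size w = n -> size l = n ->
  all (fun x => 0 < x) v -> all (fun x => 0 < x) k ->
  all (fun x => 0 < x) w -> all (fun x => 0 < x) l ->
  (forall i, i < m -> nth 0 k i <= nth 0 v i) ->
  (forall i, i < n -> nth 0 l i <= nth 0 w i) ->
  2 <= sumn k -> 2 <= sumn l ->
  C2 (v ++ w) (k ++ l) <=
    maxn (C2 v k) (C2 w l)
    + (\max_(i < m) ceildiv (nth 0 v i) (nth 0 k i))
      * (\max_(i < n) ceildiv (nth 0 w i) (nth 0 l i)).
Proof.
move=> <- sk <- sl _ pos_k _ pos_l le_kv le_lw _ _.
have [F1 [<- GC1]] := C2_attained (exists_GC le_kv).
have [F2 [<- GC2]] := C2_attained (exists_GC le_lw).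
rewrite -size_blocks.
exact: C2_min (is_GC_cat sk sl pos_k pos_l le_kv le_lw GC1 GC2).
Qed.
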